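(* Let $(\tau_\Sigma,\mathbb{B}_\Sigma)_\Sigma$ be a family indexed by finite sets $\Sigma$ with at least two elements, where $\tau_\Sigma$ is a topology on $T_\Sigma^\omega$ and $\mathbb{B}_\Sigma$ a basis of $\tau_\Sigma$, satisfying: (P1) $\mathbb{B}_\Sigma$ contains every basic clopen set $N_t$, $t$ a finite $\Sigma$-labelled binary tree; (P2) $\mathbb{B}_\Sigma$ is closed under finite unions and intersections; (P3) if $\Gamma$ is a finite set with at least two elements and $L\in\mathbb{B}_{\Sigma\times\Gamma}$ then $\pi_0[L]\in\mathbb{B}_\Sigma$; (P4) for each $L\in\mathbb{B}_\Sigma$ there is $C\in\mathbb{B}_{\Sigma\times 2}$ with $C\subseteq T_\Sigma^\omega\times\mathbb{T}_\infty$, $C$ the intersection of a closed subset of $T_\Sigma^\omega\times T_2^\omega$ with $T_\Sigma^\omega\times\mathbb{T}_\infty$, and $L=\pi_0[C]$. Then every $\tau_\Sigma$ is strong Choquet.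
   Context: $T_\Sigma^\omega$ is the set of functions $t:\{l,r\}^*\to\Sigma$ (infinite binary $\Sigma$-labelled trees) with the Cantor topology given by the distance $2^{-n}$, $n$ the least length of a node where two trees differ. A finite tree is a map $s:S\to\Sigma$ with $S\subseteq\{l,r\}^*$ finite and prefix-closed; $N_s$ is the set of $t\in T_\Sigma^\omega$ extending $s$. $T_{\Sigma\times\Gamma}^\omega$ is identified with $T_\Sigma^\omega\times T_\Gamma^\omega$ nodewise and $\pi_0$ is the first projection. A path of $t$ is the sequence of labels $t(u_0)t(u_1)\cdots$ along an infinite branch $u_0\sqsubset u_1\sqsubset\cdots$ with $u_0$ the root and each $u_{i+1}$ a child of $u_i$. $2=\{0,1\}$ and $\mathbb{T}_\infty$ is the set of $t\in T_2^\omega$ such that every path of $t$ contains infinitely many $1$'s. Strong Choquet: nonempty and Player 2 has a winning strategy in the strong Choquet game (Player 1 plays open $U_i\ni x_i$ with $U_i\subseteq V_{i-1}$, Player 2 plays open $V_i$ with $x_i\in V_i\subseteq U_i$, Player 2 wins if $\bigcap_iV_i\neq\emptyset$). *)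

From mathcomp Require Import all_boot.
Set Implicit Arguments. Unset Strict Implicit. Unset Printing Implicit Defensive.

(* Nodes of the full binary tree: words over {l,r}, l = false, r = true.
   A child of u is rcons u d. *)
Definition node := seq bool.

Definition tree (S : Type) := node -> S.

Definition subsetP {X : Type} (A B : X -> Prop) := forall x, A x -> B x.

Definition is_topology {X : Type} (T : (X -> Prop) -> Prop) : Prop :=
  [/\ T (fun _ => True), T (fun _ => False),
      (forall F : (X -> Prop) -> Prop, (forall U, F U -> T U) ->
          T (fun x => exists U, F U /\ U x)) &
      (forall U V, T U -> T V -> T (fun x => U x /\ V x))].

Definition is_basis {X : Type} (T B : (X -> Prop) -> Prop) : Prop :=
  (forall b, B b -> T b) /\
  (forall U x, T U -> U x -> exists b, [/\ B b, b x & subsetP b U]).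

(* Finite trees: a finite prefix-closed set of nodes (given as a list)
   together with a labelling; N_s = trees extending s. *)
Definition prefix_closed (D : seq node) : Prop :=
  forall u v, u \in D -> prefix v u -> v \in D.

Definition basic_clopen (S : Type) (D : seq node) (s : node -> S) : tree S -> Prop :=
  fun t => forall u, u \in D -> t u = s u.

Definition proj0_img (S G : Type) (L : tree (S * G) -> Prop) : tree S -> Prop :=
  fun t => exists t', L t' /\ forall u, (t' u).1 = t u.

(* Open / closed sets of the Cantor topology (d = 2^{-n}, n least length of
   a node where two trees differ). *)
Definition cantor_open (S : Type) (U : tree S -> Prop) : Prop :=
  forall x, U x -> exists n : nat,
    forall y, (forall u : node, (size u < n)%N -> y u = x u) -> U y.
Definition cantor_closed (S : Type) (F : tree S -> Prop) : Prop :=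
  cantor_open (fun x => ~ F x).

Definition is_branch (b : nat -> node) : Prop :=
  b 0 = [::] /\ forall i, exists d : bool, b i.+1 = rcons (b i) d.

Definition T_inf (t : tree bool) : Prop :=
  forall b, is_branch b -> forall N, exists i, (N <= i)%N /\ t (b i) = true.

(* Strong Choquet game.  A strategy of Player 2 maps the list of Player 1's
   moves (x_0,U_0),...,(x_i,U_i) to V_i. *)
Definition strategy (X : Type) := seq (X * (X -> Prop)) -> (X -> Prop).

Definition V_of (X : Type) (sg : strategy X) (p : nat -> X * (X -> Prop)) (i : nat)
  : X -> Prop := sg (mkseq p i.+1).

Definition legal_upto (X : Type) (T : (X -> Prop) -> Prop) (sg : strategy X)
  (p : nat -> X * (X -> Prop)) (n : nat) : Prop :=
  forall i, (i <= n)%N ->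
    [/\ T (p i).2, (p i).2 (p i).1 &
        (0 < i)%N -> subsetP (p i).2 (V_of sg p i.-1)].

Definition winning_strategy (X : Type) (T : (X -> Prop) -> Prop) (sg : strategy X) : Prop :=
  (forall p n, legal_upto T sg p n ->
     [/\ T (V_of sg p n), V_of sg p n (p n).1 & subsetP (V_of sg p n) (p n).2]) /\
  (forall p, (forall n, legal_upto T sg p n) ->
     exists y, forall n, V_of sg p n y).

Definition strong_choquet (X : Type) (T : (X -> Prop) -> Prop) : Prop :=
  (exists x : X, True) /\ exists sg : strategy X, winning_strategy T sg.

(* Player 2 answers a legal move (x_n, U_n) by a basic L_n with x_n in L_n ⊆ U_n, and by (P4)
   a set C_n = F_n ∩ (T_Σ^ω × T_∞), F_n closed, with π_0[C_n] = L_n.  For every earlier round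
   k <= n she keeps a witness c_{k,n} in C_k projecting to x_n and a depth d_{k,n}, and plays
   V_n = ⋂_{k<=n} π_0[C_k ∩ N_{c_{k,n} | d_{k,n}}], which is open by (P1)-(P3).  When x_{n+1}
   lies in V_n, the next witness c_{k,n+1} agrees with c_{k,n} up to depth d_{k,n}, and by
   König's lemma d_{k,n+1} can be chosen so that every branch of c_{k,n+1} carries a 1 between
   the two depths.  The witnesses for C_k therefore converge to a tree in the closed set F_k
   all of whose paths contain infinitely many 1's, i.e. to a point of C_k; its projection is
   the limit of the x_n, which thus lies in every V_n. *)

From Pilot Require Import Defs.
From mathcomp Require Import all_boot zify.
From Stdlib Require Import Classical ClassicalEpsilon FunctionalExtensionality PropExtensionality.

Set Implicit Arguments. Unset Strict Implicit. Unset Printing Implicit Defensive.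

Lemma predext (X : Type) (P Q : X -> Prop) : (forall x, P x <-> Q x) -> P = Q.
Proof.
by move=> PQ; apply: functional_extensionality => x; apply: propositional_extensionality.
Qed.

Lemma open_bigcap_upto (X : Type) (T : (X -> Prop) -> Prop) (A : nat -> X -> Prop) n :
  is_topology T -> (forall k, k <= n -> T (A k)) -> T (fun x => forall k, k <= n -> A k x).
Proof.
case=> _ _ _ openI; elim: n => [|n IH] openA.
  rewrite (_ : (fun x => _) = A 0); first exact: openA.
  by apply: predext => x; split=> [|Ax [|k] //]; apply.
rewrite (_ : (fun x => _) = fun x => (forall k, k <= n -> A k x) /\ A n.+1 x).
  by apply: openI; [apply: IH => k hk; apply: openA; lia | exact: openA].
apply: predext => x; split=> [Ax | [Ax An] k hk]; first by split=> [k hk|]; apply: Ax; lia.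
by case: (ltngtP k n.+1) hk => [/Ax|//|->].
Qed.

Definition words_of_size (i : nat) : seq node := [seq tval t | t <- enum {: i.-tuple bool}].

Lemma mem_words_of_size i u : (u \in words_of_size i) = (size u == i).
Proof.
apply/mapP/eqP => [[t _ ->]|su]; first exact: size_tuple.
have su' : size u == i by apply/eqP.
by exists (Tuple su'); rewrite ?mem_enum.
Qed.

Definition nodes_upto (d : nat) : seq node := flatten [seq words_of_size i | i <- iota 0 d.+1].

Lemma mem_nodes_upto d u : (u \in nodes_upto d) = (size u <= d).
Proof.
apply/flattenP/idP => [[s /mapP[i]]|su].
  by rewrite mem_iota => /andP[_ hi] ->; rewrite mem_words_of_size => /eqP ->; lia.
exists (words_of_size (size u)); last by rewrite mem_words_of_size.
by apply/mapP; exists (size u); rewrite ?mem_iota //; lia.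
Qed.

Lemma prefix_closed_nodes_upto d : prefix_closed (nodes_upto d).
Proof. by move=> u v; rewrite !mem_nodes_upto => su /size_prefix; lia. Qed.

Lemma basic_clopen_uptoP (X : Type) d (s t : tree X) :
  basic_clopen (nodes_upto d) s t <-> forall u, size u <= d -> t u = s u.
Proof. by split=> st u; [rewrite -mem_nodes_upto | rewrite mem_nodes_upto]; apply: st. Qed.

Lemma size_branch b i : is_branch b -> size (b i) = i.
Proof.
case=> b0 bS; elim: i => [|i IH]; first by rewrite b0.
by have [d ->] := bS i; rewrite size_rcons IH.
Qed.

Lemma take_branch b i j : is_branch b -> i <= j -> take i (b j) = b i.
Proof.
move=> bb; elim: j => [|j IH] hij.
  by rewrite (_ : i = 0) ?take0; [case: bb | lia].
case: (ltngtP i j.+1) hij => [hi _|//|->]; last by rewrite -{1}(size_branch j.+1 bb) take_size.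
by have [d ->] := bb.2 j; rewrite -cats1 takel_cat ?IH ?size_branch.
Qed.

Section Koenig.
Variable P : node -> Prop.
Hypothesis P_take : forall u i, P u -> P (take i u).

Definition extensible (u : node) : Prop :=
  forall d, size u <= d -> exists v, [/\ size v = d, P v & take (size u) v = u].

Lemma extensible_rcons u :
  extensible u -> extensible (rcons u false) \/ extensible (rcons u true).
Proof.
move=> ext_u; apply: NNPP => /not_or_and[/not_all_ex_not[d0 no0] /not_all_ex_not[d1 no1]].
have [hd0 {}no0] := imply_to_and _ _ no0.
have [hd1 {}no1] := imply_to_and _ _ no1.
rewrite size_rcons in hd0; rewrite size_rcons in hd1.
have [|v [sv Pv vu]] := ext_u (maxn d0 d1); first lia.
have next_bit : take (size u).+1 v = rcons u (nth false v (size u)).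
  by rewrite (take_nth false) ?vu //; lia.
have ext_v d : size u < d <= maxn d0 d1 ->
    [/\ size (take d v) = d, P (take d v) & take (size u).+1 (take d v) = take (size u).+1 v].
  move=> hd; rewrite size_takel ?take_takel; try lia.
  by split=> //; apply: P_take.
case: (nth false v (size u)) next_bit => next_bit.
- by apply: no1; exists (take d1 v); rewrite size_rcons -next_bit; apply: ext_v; lia.
- by apply: no0; exists (take d0 v); rewrite size_rcons -next_bit; apply: ext_v; lia.
Qed.

Lemma extensible_P u : extensible u -> P u.
Proof. by case/(_ (size u) (leqnn _)) => v [sv Pv]; rewrite -sv take_size => <-. Qed.

Lemma koenig_branch :
  (forall d, exists2 u, P u & size u = d) -> exists2 b, is_branch b & forall i, P (b i).
Proof.
move=> P_sizes.
have ext_nil : extensible [::].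
  move=> d _; have [v Pv sv] := P_sizes d.
  by exists v; rewrite take0.
pose next u := if excluded_middle_informative (extensible (rcons u false))
               then rcons u false else rcons u true.
pose b i := iter i next [::].
have ext_b i : extensible (b i).
  elim: i => //= i IH; rewrite /next; case: excluded_middle_informative => // no0.
  by case: (extensible_rcons IH).
exists b; last by move=> i; apply/extensible_P/ext_b.
split=> // i; rewrite /b /= /next.
by case: excluded_middle_informative; [exists false | exists true].
Qed.
End Koenig.

Definition hits_between (f : node -> bool) (N d : nat) : Prop :=
  forall u, size u = d -> exists2 i, N <= i <= d & f (take i u).

Lemma T_inf_hits_between f N : T_inf f -> exists2 d, N <= d & hits_between f N d.
Proof.
move=> Tf; apply: NNPP => no_depth.
pose avoids u := forall i, N <= i <= size u -> f (take i u) = false.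
have avoids_take u j : avoids u -> avoids (take j u).
  move=> av i; rewrite size_take => hi; rewrite take_takel; last by case: ifP hi; lia.
  by apply: av; case: ifP hi; lia.
have avoids_at d : exists2 u, avoids u & size u = d.
  suff [u av su] : exists2 u, avoids u & size u = maxn N d.
    by exists (take d u); [exact: avoids_take | rewrite size_takel //; lia].
  apply: NNPP => no_u; apply: no_depth; exists (maxn N d) => [|u su]; first exact: leq_maxl.
  apply: NNPP => no_i; apply: no_u; exists u => // i; rewrite su => hi.
  by apply/negbTE/negP => fi; apply: no_i; exists i.
have [b bb avoid_b] := koenig_branch avoids_take avoids_at.
have [i [Ni fi]] := Tf b bb N.
suff : f (take i (b i)) = false by rewrite take_branch // fi.
by apply: avoid_b; rewrite size_branch //; lia.
Qed.

Definition hit_depth (f : node -> bool) (N : nat) : nat :=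
  epsilon (inhabits 0) (fun d => N <= d /\ hits_between f N d).

Lemma hit_depthP f N : T_inf f -> N <= hit_depth f N /\ hits_between f N (hit_depth f N).
Proof.
case/(T_inf_hits_between N) => d Nd hits.
exact: (epsilon_spec (inhabits 0) (fun d => N <= d /\ hits_between f N d) (ex_intro _ d (conj Nd hits))).
Qed.

Section TreeLimit.
Variables (X : Type) (w : nat -> tree X) (d : nat -> nat).
Hypothesis depth_incr : forall j, d j < d j.+1.
Hypothesis w_agree : forall j u, size u <= d j -> w j.+1 u = w j u.

Definition tree_limit : tree X := fun u => w (size u) u.

Lemma leq_depth j : j <= d j.
Proof. by elim: j => // j IH; have := depth_incr j; lia. Qed.

Lemma depth_mono i j : i <= j -> d i <= d j.
Proof.
move=> /subnKC <-; elim: (j - i) => [|m IH]; first by rewrite addn0.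
by rewrite addnS; have := depth_incr (i + m); lia.
Qed.

Lemma w_agree_from i j u : i <= j -> size u <= d i -> w j u = w i u.
Proof.
move=> /subnKC <- hu; elim: (j - i) => [|m IH]; first by rewrite addn0.
by rewrite addnS w_agree // (leq_trans hu) // depth_mono // leq_addr.
Qed.

Lemma tree_limit_agree j u : size u <= d j -> tree_limit u = w j u.
Proof.
move=> hu; rewrite /tree_limit -(@w_agree_from (size u) (maxn (size u) j)) ?leq_maxl ?leq_depth //.
exact: w_agree_from (leq_maxr _ _) hu.
Qed.

Lemma closed_tree_limit F : cantor_closed F -> (forall j, F (w j)) -> F tree_limit.
Proof.
move=> closedF Fw; apply: NNPP => notF; have [n near_limit] := closedF _ notF.
apply: (near_limit (w n)) (Fw n) => u hu; apply/esym/tree_limit_agree.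
by have := leq_depth n; lia.
Qed.

Lemma T_inf_tree_limit (lab : X -> bool) :
  (forall j, hits_between (fun u => lab (w j.+1 u)) (d j).+1 (d j.+1)) ->
  T_inf (fun u => lab (tree_limit u)).
Proof.
move=> hits b bb N.
have [i /andP[lo hi] hit] := hits N (b (d N.+1)) (size_branch _ bb).
exists i; split; first by have := leq_depth N; lia.
by rewrite (tree_limit_agree (j := N.+1)) ?size_branch // -(take_branch bb hi).
Qed.
End TreeLimit.

Definition meet_cylinder (X : Type) (A : tree X -> Prop) (cd : tree X * nat) : tree X -> Prop :=
  fun c => A c /\ basic_clopen (nodes_upto cd.2) cd.1 c.

Definition legal_move (X : Type) (T : (X -> Prop) -> Prop) (m : X * (X -> Prop)) : Prop :=
  T m.2 /\ m.2 m.1.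

(* What (P4) provides for a basic neighbourhood of [x] inside [U]. *)
Definition presentation (S : finType) (B2 : (tree (S * bool) -> Prop) -> Prop)
    (x : tree S) (U : tree S -> Prop) (C : tree (S * bool) -> Prop) : Prop :=
  [/\ B2 C,
      exists F, cantor_closed F /\ forall c, C c <-> F c /\ T_inf (fun u => (c u).2),
      proj0_img C x & Defs.subsetP (proj0_img C) U].

Section ChoquetStrategy.
Variables (S : finType) (s0 : S).
Variables (tau : (tree S -> Prop) -> Prop) (B2 : (tree (S * bool) -> Prop) -> Prop).
Variable code : tree S * (tree S -> Prop) -> tree (S * bool) -> Prop.
Hypothesis tau_topology : is_topology tau.
Hypothesis B2_meet_cylinder : forall C cd, B2 C -> B2 (meet_cylinder C cd).
Hypothesis open_proj0_img : forall C, B2 C -> tau (proj0_img C).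
Hypothesis code_presentation : forall m, legal_move tau m -> presentation B2 m.1 m.2 (code m).

Local Notation move := (tree S * (tree S -> Prop))%type.

Definition pick_witness (A : tree (S * bool) -> Prop) (x : tree S) : tree (S * bool) :=
  epsilon (inhabits (fun _ => (s0, false))) (fun c => A c /\ forall u, (c u).1 = x u).

Lemma pick_witnessP A x :
  proj0_img A x -> A (pick_witness A x) /\ forall u, (pick_witness A x u).1 = x u.
Proof. by case=> c c_spec; apply: (epsilon_spec _ (fun c => A c /\ _) (ex_intro _ c c_spec)). Qed.

(* [chain p k j] is the pair (c_{k,k+j}, d_{k,k+j}) of the header. *)
Fixpoint chain (p : nat -> move) (k j : nat) : tree (S * bool) * nat :=
  if j is j'.+1 then
    let c := pick_witness (meet_cylinder (code (p k)) (chain p k j')) (p (k + j').+1).1 in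
    (c, hit_depth (fun u => (c u).2) (chain p k j').2.+1)
  else
    let c := pick_witness (code (p k)) (p k).1 in (c, hit_depth (fun u => (c u).2) 0).

Definition response (p : nat -> move) (n : nat) : tree S -> Prop :=
  fun t => forall k, k <= n -> proj0_img (meet_cylinder (code (p k)) (chain p k (n - k))) t.

Definition choquet_strategy : strategy (tree S) :=
  fun h => response (nth (fun _ => s0, fun _ => True) h) (size h).-1.

Lemma chain_ext p q k j : (forall i, i <= k + j -> p i = q i) -> chain p k j = chain q k j.
Proof.
elim: j => [|j IH] pq /=; first by rewrite pq ?leq_addr.
by rewrite IH => [|i hi]; [rewrite !pq //; lia | apply: pq; lia].
Qed.

Lemma response_ext p q n : (forall i, i <= n -> p i = q i) -> response p n = response q n.
Proof.
move=> pq; apply: predext => t.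
have same_term k : k <= n -> meet_cylinder (code (p k)) (chain p k (n - k)) =
                               meet_cylinder (code (q k)) (chain q k (n - k)).
  by move=> hk; rewrite pq // (@chain_ext p q) // subnKC.
by split=> resp k hk; [rewrite -same_term | rewrite same_term] => //; apply: resp.
Qed.

Lemma V_of_choquet_strategy p n : V_of choquet_strategy p n = response p n.
Proof. by rewrite /V_of /choquet_strategy size_mkseq; apply: response_ext => i hi; rewrite nth_mkseq. Qed.

Lemma chain0P p k :
  legal_move tau (p k) -> code (p k) (chain p k 0).1 /\ forall u, ((chain p k 0).1 u).1 = (p k).1 u.
Proof. by case/code_presentation => _ _ x_code _; apply: pick_witnessP. Qed.

Lemma chainSP p k j : response p (k + j) (p (k + j).+1).1 ->
  meet_cylinder (code (p k)) (chain p k j) (chain p k j.+1).1 /\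
  forall u, ((chain p k j.+1).1 u).1 = (p (k + j).+1).1 u.
Proof. by move/(_ k (leq_addr _ _)); rewrite addKn; apply: pick_witnessP. Qed.

Lemma response_open p n : (forall k, k <= n -> legal_move tau (p k)) -> tau (response p n).
Proof.
move=> legal; apply: open_bigcap_upto => // k /legal/code_presentation[codeB _ _ _].
exact/open_proj0_img/B2_meet_cylinder.
Qed.

Lemma response_sub p n : legal_move tau (p n) -> Defs.subsetP (response p n) (p n).2.
Proof.
case/code_presentation => _ _ _ code_sub t /(_ n (leqnn n))[c [[c_code _] ct]].
by apply: code_sub; exists c.
Qed.

Lemma response_self p n :
  (forall k, k <= n -> legal_move tau (p k)) ->
  (forall i, i < n -> response p i (p i.+1).1) -> response p n (p n).1.
Proof.
move=> legal prev k hk; have [j nkj] : exists j, n = k + j by exists (n - k); rewrite subnKC.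
subst n; rewrite addKn; case: j legal prev {hk} => [|j] legal prev.
  have [c_code c_x] := chain0P (legal k (leq_addr _ _)).
  by exists (chain p k 0).1; rewrite addn0.
rewrite addnS in prev *; have [[c_code _] c_x] := chainSP (prev _ (ltnSn _)).
by exists (chain p k j.+1).1.
Qed.

Section Limit.
Variable p : nat -> move.
Hypothesis legal : forall n, legal_move tau (p n).
Hypothesis inside : forall n, response p n (p n.+1).1.

Lemma chain_limit k : exists l, [/\ code (p k) l,
  forall j u, size u <= (chain p k j).2 -> l u = (chain p k j).1 u &
  forall j u, size u <= j -> (l u).1 = (p (k + j)).1 u].
Proof.
pose w j := (chain p k j).1; pose d j := (chain p k j).2.
have step j := chainSP (@inside (k + j)).
have w_code j : code (p k) (w j) by case: j => [|j]; [case: (chain0P (@legal k)) | case: (step j) => -[]].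
have [_ [F [closedF codeF]] _ _] := code_presentation (@legal k).
have depth j : (d j).+1 <= d j.+1 /\ hits_between (fun u => (w j.+1 u).2) (d j).+1 (d j.+1).
  by apply: hit_depthP; case/codeF: (w_code j.+1).
have w_agree j u : size u <= d j -> w j.+1 u = w j u.
  by case: (step j) => -[_ /basic_clopen_uptoP agree] _; apply: agree.
have d_incr j : d j < d j.+1 by case: (depth j).
have w_x j u : (w j u).1 = (p (k + j)).1 u.
  case: j => [|j]; first by rewrite addn0; case: (chain0P (@legal k)) => _; apply.
  by rewrite addnS; case: (step j) => _; apply.
exists (tree_limit w); split => [|j u|j u hu].
- apply/codeF; split; first by apply: closed_tree_limit => // j; case/codeF: (w_code j).
  by apply: T_inf_tree_limit => // j; case: (depth j).
- exact: (tree_limit_agree d_incr w_agree).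
- by rewrite (tree_limit_agree d_incr w_agree (j := j)) ?w_x // (leq_trans hu) ?leq_depth.
Qed.

Lemma response_limit : exists y, forall n, response p n y.
Proof.
exists (fun u => (p (size u)).1 u) => n k hk.
have [l [l_code l_agree l_x]] := chain_limit k.
have [l0 [_ _ l0_x]] := chain_limit 0.
exists l; split; first by split=> //; apply/basic_clopen_uptoP => u; apply: l_agree.
move=> u; rewrite (l_x (size u)) // -(l0_x (k + size u)) ?leq_addl //.
by rewrite (l0_x (size u)).
Qed.
End Limit.

Lemma legal_upto_next p n i : legal_upto tau choquet_strategy p n -> i < n ->
  response p i (p i.+1).1.
Proof. by move=> legal hi; have [_ x_in sub] := legal i.+1 hi; rewrite -V_of_choquet_strategy; apply: sub. Qed.

Theorem choquet_strategy_winning : winning_strategy tau choquet_strategy.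
Proof.
split=> [p n legal | p legal].
  have legal_k k : k <= n -> legal_move tau (p k) by case/legal.
  rewrite V_of_choquet_strategy; split.
  - exact: response_open.
  - by apply: response_self => // i; apply: legal_upto_next.
  - exact: response_sub (legal_k n (leqnn n)).
have legal_n n : legal_move tau (p n) by case: (legal n n (leqnn n)).
have [y y_in] := response_limit legal_n (fun n => legal_upto_next (legal n.+1) (ltnSn n)).
by exists y => n; rewrite V_of_choquet_strategy.
Qed.
End ChoquetStrategy.

Theorem theorem4p1
  (tau : forall S : finType, (tree S -> Prop) -> Prop)
  (B : forall S : finType, (tree S -> Prop) -> Prop)
  (Htop : forall S : finType, (1 < #|S|)%N -> is_topology (tau S))
  (Hbasis : forall S : finType, (1 < #|S|)%N -> is_basis (tau S) (B S))
  (P1 : forall (S : finType), (1 < #|S|)%N ->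
        forall (D : seq node) (s : node -> S),
        prefix_closed D -> B S (basic_clopen D s))
  (P2 : forall (S : finType), (1 < #|S|)%N ->
        forall L M, B S L -> B S M ->
        B S (fun t => L t \/ M t) /\ B S (fun t => L t /\ M t))
  (P3 : forall (S G : finType), (1 < #|S|)%N -> (1 < #|G|)%N ->
        forall L : tree (S * G) -> Prop, B ((S * G)%type : finType) L ->
        B S (proj0_img L))
  (P4 : forall (S : finType), (1 < #|S|)%N ->
        forall L, B S L ->
        exists C : tree (S * bool) -> Prop,
          [/\ B ((S * bool)%type : finType) C,
              (forall c, C c -> T_inf (fun u => (c u).2)),
              (exists F : tree (S * bool) -> Prop, cantor_closed F /\
                 forall c, C c <-> (F c /\ T_inf (fun u => (c u).2))) &
              (forall t, L t <-> proj0_img C t)]) :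
  forall S : finType, (1 < #|S|)%N -> strong_choquet (tau S).
Proof.
move=> S HS.
have /card_gt0P [s0 _] : 0 < #|S| by lia.
have HS2 : 1 < #|((S * bool)%type : finType)| by rewrite card_prod card_bool; lia.
have [B_open B_basis] := Hbasis S HS.
pose B2 := B ((S * bool)%type : finType).
have code_exists m : legal_move (tau S) m -> exists C, presentation B2 m.1 m.2 C.
  case=> U_open x_in; have [L [BL Lx LU]] := B_basis _ _ U_open x_in.
  have [C [BC _ closedC LC]] := P4 S HS L BL.
  exists C; split=> // [|t /LC]; [exact/LC | exact: LU].
split; first by exists (fun _ => s0).
exists (choquet_strategy s0 (fun m => epsilon (inhabits (fun _ => True)) (presentation B2 m.1 m.2))).
apply: (@choquet_strategy_winning _ _ _ B2).
- exact: Htop.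
- move=> C cd BC; apply: (proj2 (P2 _ HS2 _ _ BC _)).
  exact: P1 _ HS2 _ _ (@prefix_closed_nodes_upto _).
- by move=> C BC; apply/B_open/(P3 _ _ HS _ _ BC); rewrite card_bool.
- by move=> m /code_exists C_ex; apply: epsilon_spec.
Qed.
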